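(* Let $R$ be a ring, $M$ a right $R$-module, and $I$ a two-sided ideal of $R$ with $I\subseteq \mathrm{Ann}_R(M)$ (so $M$ is naturally a right $R/I$-module via $m(r+I)=mr$). If $M$ is an $\aleph_0$-injective $R$-module, then $M$ is an $\aleph_0$-injective $R/I$-module. Conversely, if $R$ is right fully idempotent and $M$ is an $\aleph_0$-injective $R/I$-module, then $M$ is an $\aleph_0$-injective $R$-module.
   Context: Rings are associative with identity; modules are unitary right modules. A right $S$-module $M$ is $\aleph_0$-injective if for every countably generated right ideal $J$ of $S$ and every $S$-homomorphism $f:J\to M$ there is an $S$-homomorphism $\bar f:S\to M$ with $\bar f|_J=f$. A ring $R$ is right fully idempotent if every right ideal $J$ of $R$ satisfies $J^2=J$. *)

From HB Require Import structures.
From mathcomp Require Import all_boot all_order all_algebra.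
Set Implicit Arguments. Unset Strict Implicit. Unset Printing Implicit Defensive.
Import GRing.Theory.
Local Open Scope ring_scope.

Definition is_rmodule (R : pzRingType) (M : zmodType) (act : M -> R -> M) : Prop :=
  [/\ forall m n r, act (m + n) r = act m r + act n r,
      forall m r s, act m (r + s) = act m r + act m s,
      forall m r s, act m (r * s) = act (act m r) s
    & forall m, act m 1 = m].

Definition right_ideal (R : pzRingType) (J : R -> Prop) : Prop :=
  [/\ J 0, forall x y, J x -> J y -> J (x + y) & forall x r, J x -> J (x * r)].

Definition two_sided_ideal (R : pzRingType) (I : R -> Prop) : Prop :=
  right_ideal I /\ forall x r, I x -> I (r * x).

(* J is the right ideal generated by the countable family (a i)_{i : nat},
   i.e. J = { sum_{i<n} a_i c_i }.  (Finite or empty generating sets are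
   covered by repeating generators or taking a = 0.) *)
Definition countably_generated_right_ideal (R : pzRingType) (J : R -> Prop) : Prop :=
  exists a : nat -> R, forall x,
    J x <-> exists (n : nat) (c : nat -> R), x = \sum_(i < n) a i * c i.

(* f, restricted to J, is an R-homomorphism J -> M (values outside J are
   irrelevant). *)
Definition hom_on (R : pzRingType) (M : zmodType) (act : M -> R -> M)
  (J : R -> Prop) (f : R -> M) : Prop :=
  (forall x y, J x -> J y -> f (x + y) = f x + f y) /\
  (forall x r, J x -> f (x * r) = act (f x) r).

Definition aleph0_injective (R : pzRingType) (M : zmodType) (act : M -> R -> M) : Prop :=
  forall (J : R -> Prop) (f : R -> M),
    countably_generated_right_ideal J -> hom_on act J f ->
    exists g : R -> M, hom_on act (fun _ => True) g /\ (forall x, J x -> g x = f x).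

Definition right_fully_idempotent (R : pzRingType) : Prop :=
  forall J : R -> Prop, right_ideal J ->
    forall x, J x <-> exists (n : nat) (a b : nat -> R),
      (forall i, J (a i) /\ J (b i)) /\ x = \sum_(i < n) a i * b i.

From HB Require Import structures.
From mathcomp Require Import all_boot all_order all_algebra.
From Stdlib Require Import ClassicalEpsilon.
Import GRing.Theory.
Local Open Scope ring_scope.
Set Implicit Arguments.
Unset Strict Implicit.

(* Proof of Proposition 1.3.  Present R/I as a surjective ring morphism
   pi : R -> S with kernel I.  Both directions transport an extension
   problem along pi and solve it on the other side:
   - homomorphisms S -> M pull back along pi (hom_on_comp_pi), and
     homomorphisms on a right ideal J of R that are constant on the fibres
     of pi descend to the image pi(J) (hom_on_descend);
   - countably generated right ideals correspond: generators lift and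
     project (gen_right_ideal_image, gen_right_ideal_lift);
   - a homomorphism f on J is constant on fibres as soon as it kills J /\ I
     (hom_on_congr).  For J = R this holds because I annihilates M
     (hom_vanishes_on_annihilator); for arbitrary J it is exactly where
     right full idempotence is used: J /\ I = (J /\ I)^2 and f kills every
     product x y with y in I (fully_idempotent_hom_vanishes). *)

Definition gen_right_ideal (R : pzRingType) (a : nat -> R) (x : R) : Prop :=
  exists (n : nat) (c : nat -> R), x = \sum_(i < n) a i * c i.

Lemma gen_right_ideal_right_ideal (R : pzRingType) (a : nat -> R) :
  right_ideal (gen_right_ideal a).
Proof.
split.
- by exists 0%N, (fun _ => 0); rewrite big_ord0.
- move=> _ _ [n [c ->]] [m [d ->]].
  pose pad k (e : nat -> R) i := if (i < k)%N then e i else 0.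
  exists (maxn n m), (fun i => pad n c i + pad m d i).
  have widen k (e : nat -> R) : (k <= maxn n m)%N ->
      \sum_(i < k) a i * e i = \sum_(i < maxn n m) a i * pad k e i.
    move=> le_k; rewrite (big_ord_widen _ (fun i => a i * e i) le_k) big_mkcond.
    by apply: eq_bigr => i _; rewrite /pad; case: ifP; rewrite ?mulr0.
  rewrite (widen n c (leq_maxl n m)) (widen m d (leq_maxr n m)) -big_split /=.
  by apply: eq_bigr => i _; rewrite mulrDr.
- move=> _ r [n [c ->]]; exists n, (fun i => c i * r).
  by rewrite mulr_suml; apply: eq_bigr => i _; rewrite mulrA.
Qed.

Lemma countably_generated_right_ideal_right_ideal (R : pzRingType) (J : R -> Prop) :
  countably_generated_right_ideal J -> right_ideal J.
Proof.
case=> a Ja; have [J0 JD JM] := gen_right_ideal_right_ideal a.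
split=> [|x y /Ja Jx /Ja Jy|x r /Ja Jx]; apply/Ja; [exact: J0 | exact: JD | exact: JM].
Qed.

Lemma right_ideal_meet (R : pzRingType) (J K : R -> Prop) :
  right_ideal J -> right_ideal K -> right_ideal (fun x => J x /\ K x).
Proof.
case=> J0 JD JM [K0 KD KM]; split=> // [x y [Jx Kx] [Jy Ky]|x r [Jx Kx]].
- by split; [apply: JD | apply: KD].
- by split; [apply: JM | apply: KM].
Qed.

Lemma hom_on_sub (R : pzRingType) (M : zmodType) (act : M -> R -> M)
    (J K : R -> Prop) (f : R -> M) :
  (forall x, K x -> J x) -> hom_on act J f -> hom_on act K f.
Proof. by move=> KJ [fD fM]; split=> [x y /KJ Jx /KJ Jy|x r /KJ Jx]; auto. Qed.

Section HomOnRightIdeal.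
Variables (R : pzRingType) (M : zmodType) (act : M -> R -> M).
Variables (J : R -> Prop) (f : R -> M).
Hypothesis HJ : right_ideal J.
Hypothesis Hf : hom_on act J f.

Lemma hom_on0 : f 0 = 0.
Proof.
case: HJ => J0 _ _; case: Hf => fD _.
by apply: (addIr (f 0)); rewrite add0r -fD // addr0.
Qed.

Lemma hom_onB x y : J x -> J y -> J (x - y) /\ f (x - y) = f x - f y.
Proof.
case: HJ => _ JD JM; case: Hf => fD _ Jx Jy.
have JNy : J (- y) by rewrite -mulrN1; apply: JM.
have fNy : f (- y) = - f y.
  by apply: (addrI (f y)); rewrite -fD // !subrr hom_on0.
by split; [apply: JD | rewrite fD // fNy].
Qed.

Lemma hom_on_sum n (F : nat -> R) : (forall i, J (F i)) ->
  f (\sum_(i < n) F i) = \sum_(i < n) f (F i).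
Proof.
case: HJ => J0 JD _; case: Hf => fD _ JF.
suff: J (\sum_(i < n) F i) /\ f (\sum_(i < n) F i) = \sum_(i < n) f (F i) by case.
elim: n => [|n [JS fS]]; first by rewrite !big_ord0 hom_on0.
by rewrite !big_ord_recr /= fD // fS; split=> //; apply: JD.
Qed.

Lemma hom_on_congr (I : R -> Prop) x y :
  (forall z, J z -> I z -> f z = 0) -> J x -> J y -> I (x - y) -> f x = f y.
Proof.
move=> fI Jx Jy Ixy; have [Jxy fxy] := hom_onB Jx Jy.
by apply/eqP; rewrite -subr_eq0 -fxy fI.
Qed.

End HomOnRightIdeal.

(* A homomorphism defined on all of R is left multiplication by g 1, so it
   vanishes on any ideal annihilating M. *)
Lemma hom_vanishes_on_annihilator (R : pzRingType) (M : zmodType)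
    (act : M -> R -> M) (I : R -> Prop) (g : R -> M) :
  (forall m r, I r -> act m r = 0) -> hom_on act (fun _ => True) g ->
  forall r, I r -> g r = 0.
Proof. by move=> Iann [_ gM] r Ir; rewrite -[r]mul1r gM // Iann. Qed.

(* Over a right fully idempotent ring, a homomorphism on a right ideal J
   vanishes on J /\ I whenever I annihilates M: every element of J /\ I is
   a sum of products x y with x in J and y in I, and f (x y) = (f x) y = 0. *)
Lemma fully_idempotent_hom_vanishes (R : pzRingType) (M : zmodType)
    (act : M -> R -> M) (I J : R -> Prop) (f : R -> M) :
  right_fully_idempotent R -> right_ideal I -> right_ideal J ->
  (forall m r, I r -> act m r = 0) -> hom_on act J f ->
  forall z, J z -> I z -> f z = 0.
Proof.
move=> Rfi HI HJ Iann Hf z Jz Iz; have JI := right_ideal_meet HJ HI.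
have [n [b [c [bcJI ->]]]] := (Rfi _ JI z).1 (conj Jz Iz).
have [_ _ JM] := HJ; have [_ fM] := Hf.
have Jbc i : J (b i * c i) by have [[Jb _] _] := bcJI i; apply: JM.
rewrite (hom_on_sum HJ Hf n Jbc).
by apply: big1 => i _; have [[Jb _] [_ Ic]] := bcJI i; rewrite fM // Iann.
Qed.

Lemma gen_right_ideal_countably_generated (R : pzRingType) (a : nat -> R) :
  countably_generated_right_ideal (gen_right_ideal a).
Proof. by exists a. Qed.

Section Transport.
Variables (R S : pzRingType) (pi : {rmorphism R -> S}).
Variables (M : zmodType) (act : M -> R -> M) (actS : M -> S -> M).
Hypothesis pi_surj : forall s : S, exists r : R, pi r = s.
Hypothesis act_compat : forall m r, actS m (pi r) = act m r.

Lemma lift_family (a : nat -> S) : exists b : nat -> R, forall i, pi (b i) = a i.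
Proof.
exists (fun i => proj1_sig (constructive_indefinite_description _ (pi_surj (a i)))).
by move=> i; case: constructive_indefinite_description.
Qed.

Lemma gen_right_ideal_image (a : nat -> R) (b : nat -> S) :
  (forall i, pi (a i) = b i) ->
  forall x, gen_right_ideal a x -> gen_right_ideal b (pi x).
Proof.
move=> ab _ [n [c ->]]; exists n, (fun i => pi (c i)).
by rewrite rmorph_sum; apply: eq_bigr => i _; rewrite rmorphM ab.
Qed.

Lemma gen_right_ideal_lift (a : nat -> R) (b : nat -> S) :
  (forall i, pi (a i) = b i) ->
  forall s, gen_right_ideal b s -> exists x, gen_right_ideal a x /\ pi x = s.
Proof.
move=> ab _ [n [c ->]]; have [d dc] := lift_family c.
exists (\sum_(i < n) a i * d i); split; first by exists n, d.
by rewrite rmorph_sum; apply: eq_bigr => i _; rewrite rmorphM ab dc.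
Qed.

Lemma hom_on_comp_pi (P : S -> Prop) (g : S -> M) :
  hom_on actS P g -> hom_on act (fun x => P (pi x)) (fun x => g (pi x)).
Proof.
case=> gD gM; split=> [x y Px Py | x r Px]; first by rewrite rmorphD gD.
by rewrite rmorphM gM // act_compat.
Qed.

(* The map induced on pi(J) by f : R -> M, using a chosen preimage in J;
   it is well defined when f is constant on the fibres of pi inside J. *)
Definition descend (J : R -> Prop) (f : R -> M) (s : S) : M :=
  match excluded_middle_informative (exists x, J x /\ pi x = s) with
  | left preimage => f (proj1_sig (constructive_indefinite_description _ preimage))
  | right _ => 0
  end.

Section Descend.
Variables (J : R -> Prop) (f : R -> M).
Hypothesis f_fibres : forall x y, J x -> J y -> pi x = pi y -> f x = f y.

Lemma descendE x : J x -> descend J f (pi x) = f x.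
Proof.
move=> Jx; rewrite /descend; case: excluded_middle_informative => [pre|]; last first.
  by case; exists x.
by case: constructive_indefinite_description => y /= [Jy piy]; apply: f_fibres.
Qed.

Lemma hom_on_descend : right_ideal J -> hom_on act J f ->
  hom_on actS (fun s => exists x, J x /\ pi x = s) (descend J f).
Proof.
case=> _ JD JM [fD fM]; split=> [_ _ [x [Jx <-]] [y [Jy <-]] | _ t [x [Jx <-]]].
  by rewrite -rmorphD !descendE //; [apply: fD | apply: JD].
have [r <-] := pi_surj t.
by rewrite -rmorphM act_compat !descendE //; [apply: fM | apply: JM].
Qed.

End Descend.
End Transport.

Unset Implicit Arguments.

Theorem proposition1p3 (R : pzRingType) (M : zmodType) (act : M -> R -> M)
  (Hmod : is_rmodule act) (I : R -> Prop) (HI : two_sided_ideal I)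
  (Hann : forall m r, I r -> act m r = 0)
  (S : pzRingType) (pi : {rmorphism R -> S})
  (Hsurj : forall s : S, exists r : R, pi r = s)
  (Hker : forall r : R, pi r = 0 <-> I r)
  (actS : M -> S -> M) (Hcompat : forall m r, actS m (pi r) = act m r) :
  (aleph0_injective act -> aleph0_injective actS) /\
  (right_fully_idempotent R -> aleph0_injective actS -> aleph0_injective act).
Proof.
have pi_congr x y : pi x = pi y -> I (x - y).
  by move=> e; apply/Hker; rewrite rmorphB e subrr.
have [I_right _] := HI.
split=> [R_inj J f [a Ja] Hf | R_fi S_inj J f Jcg Hf].
- (* Lift J to the right ideal of R generated by lifts of its generators. *)
  have [b ab] := lift_family Hsurj a.
  have f_pi : hom_on act (gen_right_ideal b) (fun x => f (pi x)).
    by apply: hom_on_sub (hom_on_comp_pi Hcompat Hf) => x /(gen_right_ideal_image ab)/Ja.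
  have [g [Hg gf]] := R_inj _ _ (gen_right_ideal_countably_generated b) f_pi.
  have g_fibres x y : True -> True -> pi x = pi y -> g x = g y.
    have R_ideal : right_ideal (fun _ : R => True) by [].
    move=> Tx Ty /pi_congr; apply: (hom_on_congr R_ideal Hg _ Tx Ty) => z _.
    exact: hom_vanishes_on_annihilator Hann Hg z.
  exists (descend pi (fun _ => True) g); split.
    apply: hom_on_sub (hom_on_descend Hsurj Hcompat g_fibres _ Hg) => // s _.
    by have [x <-] := Hsurj s; exists x.
  by move=> _ /Ja/(gen_right_ideal_lift Hsurj ab) [x [bx <-]]; rewrite descendE // gf.
- (* Push J forward to S; full idempotence makes f constant on fibres. *)
  have HJ := countably_generated_right_ideal_right_ideal Jcg; case: Jcg => a Ja.
  have f_fibres x y : J x -> J y -> pi x = pi y -> f x = f y.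
    move=> Jx Jy /pi_congr; apply: (hom_on_congr HJ Hf _ Jx Jy).
    exact: fully_idempotent_hom_vanishes R_fi I_right HJ Hann Hf.
  have pia i : pi (a i) = pi (a i) by [].
  have fS : hom_on actS (gen_right_ideal (fun i => pi (a i))) (descend pi J f).
    apply: hom_on_sub (hom_on_descend Hsurj Hcompat f_fibres HJ Hf) => s.
    by move=> /(gen_right_ideal_lift Hsurj pia) [x [/Ja Jx <-]]; exists x.
  have [g [Hg gf]] := S_inj _ _ (gen_right_ideal_countably_generated _) fS.
  exists (fun x => g (pi x)); split; first exact: (hom_on_comp_pi Hcompat Hg).
  move=> x Jx; rewrite gf ?descendE //.
  exact: gen_right_ideal_image pia _ ((Ja x).1 Jx).
Qed.
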